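(* Let $J\subseteq\mathbb R$ be an open interval, $A:J\to\mathbb R$ of class $C^3$, and $x_0\in J$ with $A''(x_0)\neq0$; let $\kappa_0=A''(x_0)/s(x_0)^3$. If $\tilde\epsilon>0$ is sufficiently small, then there is $\tilde\delta>0$ with $\tilde I=(x_0-\tilde\delta,x_0+\tilde\delta)\subset J$ (namely the $\delta$ furnished by the following local statement applied with $\epsilon=\tilde\epsilon$: for every three-tuple $\mathbf z$ of distinct points of $\Gamma(\tilde I)=\{x+iA(x):x\in\tilde I\}$ one has $|c^2(\mathbf z)-\kappa_0^2|<\tilde\epsilon$, $|\mathtt S[\mathrm{Re}K_\Gamma](\mathbf z)-\frac32c^2(\mathbf z)|<\tilde\epsilon$ and $|\mathtt S[\mathrm{Im}K_\Gamma](\mathbf z)+\frac12c^2(\mathbf z)|<\tilde\epsilon$) such that for every three-tuple $\mathbf z$ of non-collinear points in $\Gamma(\tilde I)^3$, $$\Bigl|\frac{\mathtt S[\mathrm{Re}K_\Gamma](\mathbf z)}{c^2(\mathbf z)}-\frac32\Bigr|<\frac{\tilde\epsilon}{\kappa_0^2-\tilde\epsilon},\qquad \Bigl|\frac{\mathtt S[\mathrm{Im}K_\Gamma](\mathbf z)}{c^2(\mathbf z)}+\frac12\Bigr|<\frac{\tilde\epsilon}{\kappa_0^2-\tilde\epsilon}.$$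
   Context: $\Gamma=\{x+iA(x): x\in J\}$, $s(x)=\sqrt{1+(A'(x))^2}$. The kernel (normalizing factor $1/(2\pi)$ omitted) is $K_\Gamma(w,z)=\dfrac{A'(x)-i}{s(x)\,[\,x-y+i(A(x)-A(y))\,]}$ for $w=x+iA(x)$, $z=y+iA(y)$, $x\neq y$. For $K$ defined off the diagonal and distinct $z_1,z_2,z_3$, $\mathtt S[K](\mathbf z)=\sum_{\sigma\in S_3}K(z_{\sigma(1)},z_{\sigma(2)})\overline{K(z_{\sigma(1)},z_{\sigma(3)})}$. The Menger curvature $c(\mathbf z)$ is $0$ for collinear points and otherwise the reciprocal of the radius of the circle through the three points. *)

From Stdlib Require Import Reals.
From Coquelicot Require Import Coquelicot.
Open Scope R_scope.

Definition inJ (a b : Rbar) (x : R) : Prop := Rbar_lt a x /\ Rbar_lt x b.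

Definition C3_on (a b : Rbar) (A : R -> R) : Prop :=
  (forall x, inJ a b x -> forall k, (k <= 3)%nat -> ex_derive_n A k x) /\
  (forall x, inJ a b x -> continuous (Derive_n A 3) x).

Definition sfun (A : R -> R) (x : R) : R := sqrt (1 + (Derive A x) ^ 2).

Definition kappa0 (A : R -> R) (x0 : R) : R := Derive_n A 2 x0 / (sfun A x0) ^ 3.

Definition onGamma (A : R -> R) (x0 delta : R) (z : C) : Prop :=
  exists x, Rabs (x - x0) < delta /\ z = (x, A x).

Definition KGamma (A : R -> R) (w z : C) : C :=
  let x := Re w in let y := Re z in
  Cdiv (Derive A x, -1) (Cmult (RtoC (sfun A x)) (x - y, A x - A y)).

(* S[K](z1,z2,z3) = sum_{sigma in S_3} K(z_s1, z_s2) * conj(K(z_s1, z_s3)),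
   for a real-valued kernel K (so conjugation is the identity). *)
Definition Sreal (K : C -> C -> R) (z1 z2 z3 : C) : R :=
    K z1 z2 * K z1 z3 + K z1 z3 * K z1 z2
  + K z2 z1 * K z2 z3 + K z2 z3 * K z2 z1
  + K z3 z1 * K z3 z2 + K z3 z2 * K z3 z1.

Definition ReK (A : R -> R) : C -> C -> R := fun w z => Re (KGamma A w z).
Definition ImK (A : R -> R) : C -> C -> R := fun w z => Im (KGamma A w z).

Definition collinear (z1 z2 z3 : C) : Prop :=
  exists p q r : R, (p <> 0 \/ q <> 0) /\
    p * Re z1 + q * Im z1 = r /\ p * Re z2 + q * Im z2 = r /\
    p * Re z3 + q * Im z3 = r.

Definition menger (z1 z2 z3 : C) (c : R) : Prop :=
  (collinear z1 z2 z3 /\ c = 0) \/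
  (~ collinear z1 z2 z3 /\
   exists (p : C) (rad : R), 0 < rad /\
     Cmod (Cminus z1 p) = rad /\ Cmod (Cminus z2 p) = rad /\
     Cmod (Cminus z3 p) = rad /\ c = / rad).

From Stdlib Require Import Reals Lra Lia Psatz.
From Coquelicot Require Import Coquelicot.
Open Scope R_scope.

(* Write m(x, y) for the slope of the chord of the graph over [x, y] and
   D(x, y) = (A'(x) - m(x, y)) / (x - y) = [x, x, y]A.  On the graph the kernel is explicit,
   Re K = D / (s (1 + m^2)), the Menger curvature of three graph points is
   c^2 = 4 [x1, x2, x3]A^2 / prod (1 + m_ij^2), and S[Re K] + S[Im K] = c^2 (Melnikov's identity).
   As the three points merge at x0, the mean value theorem and Taylor's formula make every m_ij
   tend to A'(x0) and every D(x_i, x_j), as well as [x1, x2, x3]A, tend to A''(x0) / 2.  Hence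
   c^2 -> kappa0^2, S[Re K] -> 3/2 kappa0^2 and S[Im K] = c^2 - S[Re K] -> -1/2 kappa0^2, and
   dividing by c^2 > kappa0^2 - eps gives the bounds on the ratios. *)

(** * The kernel on the graph *)

Definition slope (A : R -> R) (x y : R) : R := (A y - A x) / (y - x).

Definition confluent_divdiff (A : R -> R) (x y : R) : R :=
  (Derive A x - slope A x y) / (x - y).

Definition divdiff2 (A : R -> R) (x1 x2 x3 : R) : R :=
  (slope A x1 x3 - slope A x1 x2) / (x3 - x2).

Definition graph_curv2 (A : R -> R) (x1 x2 x3 : R) : R :=
  4 * divdiff2 A x1 x2 x3 ^ 2 /
  ((1 + slope A x1 x2 ^ 2) * (1 + slope A x1 x3 ^ 2) * (1 + slope A x2 x3 ^ 2)).

Definition ReK_pair (A : R -> R) (x y z : R) : R :=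
  confluent_divdiff A x y * confluent_divdiff A x z /
  ((1 + Derive A x ^ 2) * (1 + slope A x y ^ 2) * (1 + slope A x z ^ 2)).

Definition graph_SRe (A : R -> R) (x1 x2 x3 : R) : R :=
  2 * (ReK_pair A x1 x2 x3 + ReK_pair A x2 x1 x3 + ReK_pair A x3 x1 x2).

Lemma sfun_gt0 A x : 0 < sfun A x.
Proof. apply sqrt_lt_R0; nra. Qed.

Lemma sfun_sq A x : sfun A x ^ 2 = 1 + Derive A x ^ 2.
Proof. apply pow2_sqrt; nra. Qed.

Lemma one_plus_sq_neq0 m : 1 + m ^ 2 <> 0.
Proof. nra. Qed.

Lemma sum_sq_neq0 a b : a <> 0 -> a ^ 2 + b ^ 2 <> 0.
Proof. intros Ha. pose proof (pow2_gt_0 a Ha). nra. Qed.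

Ltac nonzero_denominators :=
  repeat split; try lra;
  try match goal with |- ?a * ?a + ?b * ?b <> 0 =>
        change (Rsqr a + Rsqr b <> 0); rewrite !Rsqr_pow2 end;
  apply sum_sq_neq0; try apply Rmult_integral_contrapositive_currified; lra.

Lemma ReK_graph A x y : x <> y ->
  ReK A (x, A x) (y, A y) = confluent_divdiff A x y / (sfun A x * (1 + slope A x y ^ 2)).
Proof.
  intros Hxy. pose proof (sfun_gt0 A x).
  unfold ReK, KGamma, confluent_divdiff, slope, Cdiv, Cmult, Cinv, RtoC; simpl.
  field; nonzero_denominators.
Qed.

Lemma ImK_graph A x y : x <> y ->
  ImK A (x, A x) (y, A y) =
  - (1 + Derive A x * slope A x y) / (sfun A x * (x - y) * (1 + slope A x y ^ 2)).
Proof.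
  intros Hxy. pose proof (sfun_gt0 A x).
  unfold ImK, KGamma, slope, Cdiv, Cmult, Cinv, RtoC; simpl.
  field; nonzero_denominators.
Qed.

Lemma Sreal_pairs (K : C -> C -> R) z1 z2 z3 :
  Sreal K z1 z2 z3 = 2 * (K z1 z2 * K z1 z3 + K z2 z1 * K z2 z3 + K z3 z1 * K z3 z2).
Proof. unfold Sreal. ring. Qed.

Lemma ReK_mul_graph A x y z : x <> y -> x <> z ->
  ReK A (x, A x) (y, A y) * ReK A (x, A x) (z, A z) = ReK_pair A x y z.
Proof.
  intros Hxy Hxz. rewrite !ReK_graph by assumption. unfold ReK_pair. rewrite <- sfun_sq.
  pose proof (sfun_gt0 A x). pose proof (one_plus_sq_neq0 (slope A x y)).
  pose proof (one_plus_sq_neq0 (slope A x z)).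
  field. lra.
Qed.

Lemma ReK_ImK_mul_graph A x y z : x <> y -> x <> z ->
  ReK A (x, A x) (y, A y) * ReK A (x, A x) (z, A z) +
  ImK A (x, A x) (y, A y) * ImK A (x, A x) (z, A z) =
  (1 + slope A x y * slope A x z) /
  ((x - y) * (x - z) * (1 + slope A x y ^ 2) * (1 + slope A x z ^ 2)).
Proof.
  intros Hxy Hxz. rewrite !ReK_graph, !ImK_graph by assumption. unfold confluent_divdiff.
  pose proof (sfun_sq A x) as Hs2. pose proof (sfun_gt0 A x).
  pose proof (one_plus_sq_neq0 (slope A x y)). pose proof (one_plus_sq_neq0 (slope A x z)).
  set (p := Derive A x) in *. set (m := slope A x y) in *. set (m' := slope A x z) in *.
  set (s := sfun A x) in *.
  (* (p - m) (p - m') + (1 + p m) (1 + p m') = (1 + p^2) (1 + m m'), and s^2 = 1 + p^2. *)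
  transitivity (((p - m) * (p - m') + (1 + p * m) * (1 + p * m')) /
     (s ^ 2 * (x - y) * (x - z) * (1 + m ^ 2) * (1 + m' ^ 2))).
  - field. repeat split; lra.
  - rewrite Hs2. field. repeat split; try lra. nra.
Qed.

Lemma graph_melnikov A x1 x2 x3 : x1 <> x2 -> x1 <> x3 -> x2 <> x3 ->
  2 * ((1 + slope A x1 x2 * slope A x1 x3) /
       ((x1 - x2) * (x1 - x3) * (1 + slope A x1 x2 ^ 2) * (1 + slope A x1 x3 ^ 2)) +
       (1 + slope A x2 x1 * slope A x2 x3) /
       ((x2 - x1) * (x2 - x3) * (1 + slope A x2 x1 ^ 2) * (1 + slope A x2 x3 ^ 2)) +
       (1 + slope A x3 x1 * slope A x3 x2) /
       ((x3 - x1) * (x3 - x2) * (1 + slope A x3 x1 ^ 2) * (1 + slope A x3 x2 ^ 2)))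
  = graph_curv2 A x1 x2 x3.
Proof.
  intros H12 H13 H23. unfold graph_curv2, divdiff2, slope.
  set (a1 := A x1). set (a2 := A x2). set (a3 := A x3).
  field. nonzero_denominators.
Qed.

Lemma Sreal_ReK_graph A x1 x2 x3 : x1 <> x2 -> x1 <> x3 -> x2 <> x3 ->
  Sreal (ReK A) (x1, A x1) (x2, A x2) (x3, A x3) = graph_SRe A x1 x2 x3.
Proof. intros. rewrite Sreal_pairs, !ReK_mul_graph by auto. reflexivity. Qed.

Lemma Sreal_ReK_add_ImK_graph A x1 x2 x3 : x1 <> x2 -> x1 <> x3 -> x2 <> x3 ->
  Sreal (ReK A) (x1, A x1) (x2, A x2) (x3, A x3) +
  Sreal (ImK A) (x1, A x1) (x2, A x2) (x3, A x3) = graph_curv2 A x1 x2 x3.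
Proof.
  intros. rewrite <- graph_melnikov by assumption.
  rewrite <- (ReK_ImK_mul_graph A x1 x2 x3), <- (ReK_ImK_mul_graph A x2 x1 x3),
    <- (ReK_ImK_mul_graph A x3 x1 x2) by auto.
  rewrite !Sreal_pairs. ring.
Qed.

(** * Menger curvature *)

Definition cross (z1 z2 z3 : C) : R :=
  (Re z2 - Re z1) * (Im z3 - Im z1) - (Im z2 - Im z1) * (Re z3 - Re z1).

Lemma collinear_cross z1 z2 z3 : collinear z1 z2 z3 -> cross z1 z2 z3 = 0.
Proof.
  intros [p [q [r [Hpq [E1 [E2 E3]]]]]].
  assert (L2 : p * (Re z2 - Re z1) + q * (Im z2 - Im z1) = 0) by lra.
  assert (L3 : p * (Re z3 - Re z1) + q * (Im z3 - Im z1) = 0) by lra.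
  destruct Hpq as [Hp | Hq].
  - apply (Rmult_eq_reg_l p); [|exact Hp]. rewrite Rmult_0_r.
    replace (p * cross z1 z2 z3) with
      ((p * (Re z2 - Re z1) + q * (Im z2 - Im z1)) * (Im z3 - Im z1) -
       (p * (Re z3 - Re z1) + q * (Im z3 - Im z1)) * (Im z2 - Im z1)) by (unfold cross; ring).
    rewrite L2, L3. ring.
  - apply (Rmult_eq_reg_l q); [|exact Hq]. rewrite Rmult_0_r.
    replace (q * cross z1 z2 z3) with
      ((p * (Re z3 - Re z1) + q * (Im z3 - Im z1)) * (Re z2 - Re z1) -
       (p * (Re z2 - Re z1) + q * (Im z2 - Im z1)) * (Re z3 - Re z1)) by (unfold cross; ring).
    rewrite L2, L3. ring.
Qed.

(* The circumcentre p, seen from z1, solves a 2x2 linear system with determinant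
   cross z1 z2 z3; Cramer's rule then expresses the radius. *)
Lemma circumradius_sq z1 z2 z3 p rad :
  Cmod (Cminus z1 p) = rad -> Cmod (Cminus z2 p) = rad -> Cmod (Cminus z3 p) = rad ->
  4 * cross z1 z2 z3 ^ 2 * rad ^ 2 =
  Cmod (Cminus z2 z1) ^ 2 * Cmod (Cminus z3 z1) ^ 2 * Cmod (Cminus z3 z2) ^ 2.
Proof.
  destruct z1 as [a1 b1], z2 as [a2 b2], z3 as [a3 b3], p as [p1 p2].
  intros E1 E2 E3. rewrite !Cmod2_alt.
  apply (f_equal (fun r => r ^ 2)) in E1. apply (f_equal (fun r => r ^ 2)) in E2.
  apply (f_equal (fun r => r ^ 2)) in E3.
  rewrite Cmod2_alt in E1, E2, E3.
  unfold cross; cbn [Cminus Cplus Copp Re Im fst snd] in *.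
  set (q1 := p1 - a1) in *. set (q2 := p2 - b1).
  set (u1 := a2 - a1). set (u2 := b2 - b1). set (v1 := a3 - a1). set (v2 := b3 - b1).
  assert (L1 : 2 * (q1 * u1 + q2 * u2) = u1 ^ 2 + u2 ^ 2) by (unfold q1, q2, u1, u2; nra).
  assert (L2 : 2 * (q1 * v1 + q2 * v2) = v1 ^ 2 + v2 ^ 2) by (unfold q1, q2, v1, v2; nra).
  assert (R0 : q1 ^ 2 + q2 ^ 2 = rad ^ 2) by (unfold q1, q2; nra).
  assert (M1 : 2 * (u1 * v2 - u2 * v1) * q1 = (u1 ^ 2 + u2 ^ 2) * v2 - (v1 ^ 2 + v2 ^ 2) * u2)
    by (rewrite <- L1, <- L2; ring).
  assert (M2 : 2 * (u1 * v2 - u2 * v1) * q2 = (v1 ^ 2 + v2 ^ 2) * u1 - (u1 ^ 2 + u2 ^ 2) * v1)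
    by (rewrite <- L1, <- L2; ring).
  rewrite <- R0.
  replace (4 * (u1 * v2 - u2 * v1) ^ 2 * (q1 ^ 2 + q2 ^ 2)) with
    ((2 * (u1 * v2 - u2 * v1) * q1) ^ 2 + (2 * (u1 * v2 - u2 * v1) * q2) ^ 2) by ring.
  rewrite M1, M2. unfold u1, u2, v1, v2. ring.
Qed.

Lemma menger_sq z1 z2 z3 c : cross z1 z2 z3 <> 0 -> menger z1 z2 z3 c ->
  c ^ 2 * (Cmod (Cminus z2 z1) ^ 2 * Cmod (Cminus z3 z1) ^ 2 * Cmod (Cminus z3 z2) ^ 2) =
  4 * cross z1 z2 z3 ^ 2.
Proof.
  intros Hcross [[Hcol _] | [_ [p [rad [Hrad [E1 [E2 [E3 ->]]]]]]]].
  - exfalso. exact (Hcross (collinear_cross _ _ _ Hcol)).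
  - rewrite <- (circumradius_sq z1 z2 z3 p rad) by assumption. field. lra.
Qed.

Lemma graph_chord_sq A x y : x <> y ->
  Cmod (Cminus (y, A y) (x, A x)) ^ 2 = (y - x) ^ 2 * (1 + slope A x y ^ 2).
Proof.
  intros Hxy. rewrite Cmod2_alt. cbn [Cminus Cplus Copp Re Im fst snd].
  unfold slope. field. lra.
Qed.

Lemma graph_cross A x1 x2 x3 : x1 <> x2 -> x1 <> x3 -> x2 <> x3 ->
  cross (x1, A x1) (x2, A x2) (x3, A x3) =
  (x2 - x1) * (x3 - x1) * (x3 - x2) * divdiff2 A x1 x2 x3.
Proof. intros. unfold cross, divdiff2, slope; simpl. field. repeat split; lra. Qed.

Lemma menger_graph A x1 x2 x3 c : x1 <> x2 -> x1 <> x3 -> x2 <> x3 ->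
  divdiff2 A x1 x2 x3 <> 0 -> menger (x1, A x1) (x2, A x2) (x3, A x3) c ->
  c ^ 2 = graph_curv2 A x1 x2 x3.
Proof.
  intros H12 H13 H23 Hdd Hm.
  assert (Hcross : cross (x1, A x1) (x2, A x2) (x3, A x3) <> 0).
  { rewrite graph_cross by assumption.
    apply Rmult_integral_contrapositive_currified; [|exact Hdd].
    repeat apply Rmult_integral_contrapositive_currified; lra. }
  pose proof (menger_sq _ _ _ c Hcross Hm) as Hsq.
  rewrite !graph_chord_sq, graph_cross in Hsq by assumption.
  pose proof (one_plus_sq_neq0 (slope A x1 x2)). pose proof (one_plus_sq_neq0 (slope A x1 x3)).
  pose proof (one_plus_sq_neq0 (slope A x2 x3)).
  assert (x2 - x1 <> 0) by lra. assert (x3 - x1 <> 0) by lra. assert (x3 - x2 <> 0) by lra.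
  unfold graph_curv2. apply (Rmult_eq_reg_r
    ((x2 - x1) ^ 2 * (1 + slope A x1 x2 ^ 2) * ((x3 - x1) ^ 2 * (1 + slope A x1 x3 ^ 2)) *
     ((x3 - x2) ^ 2 * (1 + slope A x2 x3 ^ 2)))).
  - rewrite Hsq. field. auto.
  - repeat apply Rmult_integral_contrapositive_currified; auto; apply pow_nonzero; auto.
Qed.

(** * Mean value forms of divided differences *)

Lemma segment_in_ball x0 d x y t : Rabs (x - x0) < d -> Rabs (y - x0) < d ->
  Rmin x y <= t <= Rmax x y -> Rabs (t - x0) < d.
Proof.
  unfold Rmin, Rmax. intros Hx Hy Ht.
  apply Rabs_def2 in Hx, Hy. apply Rabs_def1; destruct (Rle_dec x y); lra.
Qed.

Lemma ball_locally x0 d t : Rabs (t - x0) < d -> locally t (fun u => Rabs (u - x0) < d).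
Proof.
  intros Ht. assert (Hr : 0 < d - Rabs (t - x0)) by lra.
  exists (mkposreal _ Hr). intros u Hu. change (Rabs (u - t) < d - Rabs (t - x0)) in Hu.
  replace (u - x0) with ((u - t) + (t - x0)) by ring.
  pose proof (Rabs_triang (u - t) (t - x0)). lra.
Qed.

Lemma ex_derive_continuity_pt f x : ex_derive f x -> continuity_pt f x.
Proof. intros Hf. apply continuity_pt_filterlim, (ex_derive_continuous f x Hf). Qed.

Lemma slope_mean_value A x0 d x y :
  (forall t, Rabs (t - x0) < d -> ex_derive A t) ->
  Rabs (x - x0) < d -> Rabs (y - x0) < d -> x <> y ->
  exists c, Rabs (c - x0) < d /\ slope A x y = Derive A c.
Proof.
  intros HA Hx Hy Hxy.
  destruct (MVT_gen A x y (Derive A)) as [c [Hc E]].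
  - intros t Ht. apply Derive_correct, HA, (segment_in_ball x0 d x y); auto; lra.
  - intros t Ht. apply ex_derive_continuity_pt, HA, (segment_in_ball x0 d x y); auto.
  - exists c. split; [exact (segment_in_ball x0 d x y c Hx Hy Hc)|].
    unfold slope. rewrite E. field. lra.
Qed.

Lemma confluent_divdiff_taylor A x y : x < y ->
  (forall t, x <= t <= y -> forall k, (k <= 2)%nat -> ex_derive_n A k t) ->
  exists c, x < c < y /\ confluent_divdiff A x y = Derive_n A 2 c / 2.
Proof.
  intros Hxy HA. destruct (Taylor_Lagrange A 1 x y Hxy HA) as [c [Hc E]].
  exists c. split; [exact Hc|]. simpl in E.
  change (Derive (fun t => A t)) with (Derive A) in E.
  change (Derive (fun t => Derive A t) c) with (Derive_n A 2 c) in E.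
  unfold confluent_divdiff, slope. rewrite E. field. lra.
Qed.

(* Reflecting the graph through the vertical axis exchanges the two orders of x and y. *)
Lemma confluent_divdiff_opp A x y : ex_derive A x -> x <> y ->
  confluent_divdiff (fun t => A (- t)) (- x) (- y) = confluent_divdiff A x y.
Proof.
  intros HA Hxy. unfold confluent_divdiff, slope.
  rewrite (Derive_comp A Ropp)
    by (rewrite ?Ropp_involutive; auto using ex_derive_opp, ex_derive_id).
  rewrite Derive_opp, Derive_id, !Ropp_involutive. field. lra.
Qed.

Lemma is_derive_slope (A : R -> R) (x t : R) : ex_derive A t -> t <> x ->
  is_derive (slope A x) t (confluent_divdiff A t x).
Proof.
  intros HA Htx. unfold slope. auto_derive.
  - repeat split; auto. lra.
  - unfold confluent_divdiff, slope. change (Derive (fun u => A u)) with (Derive A). field. lra.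
Qed.

Lemma divdiff2_swap12 A x1 x2 x3 : x1 <> x2 -> x1 <> x3 -> x2 <> x3 ->
  divdiff2 A x1 x2 x3 = divdiff2 A x2 x1 x3.
Proof. intros. unfold divdiff2, slope. field. repeat split; lra. Qed.

Section TwiceDerivableOnBall.

Variables (A : R -> R) (x0 d : R).
Hypothesis HA : forall t, Rabs (t - x0) < d -> forall k, (k <= 2)%nat -> ex_derive_n A k t.

Lemma derivable2_near t : Rabs (t - x0) < d ->
  locally t (fun u => forall k, (k <= 2)%nat -> ex_derive_n A k u).
Proof. intros Ht. apply (filter_imp _ _ HA), ball_locally, Ht. Qed.

Lemma confluent_divdiff_mean_value x y :
  Rabs (x - x0) < d -> Rabs (y - x0) < d -> x <> y ->
  exists c, Rabs (c - x0) < d /\ confluent_divdiff A x y = Derive_n A 2 c / 2.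
Proof.
  intros Hx Hy Hxy. destruct (Rlt_or_le x y) as [Hlt | Hle].
  - assert (Hseg : forall t, x <= t <= y -> Rabs (t - x0) < d).
    { intros t Ht. apply (segment_in_ball x0 d x y); auto.
      rewrite Rmin_left, Rmax_right; lra. }
    destruct (confluent_divdiff_taylor A x y Hlt) as [c [Hc E]].
    + intros t Ht. apply HA, Hseg, Ht.
    + exists c. split; [apply Hseg; lra | exact E].
  - assert (Hseg : forall t, - x <= t <= - y -> Rabs (- t - x0) < d).
    { intros t Ht. apply (segment_in_ball x0 d x y); auto.
      rewrite Rmin_right, Rmax_left; lra. }
    destruct (confluent_divdiff_taylor (fun t => A (- t)) (- x) (- y)) as [c [Hc E]];
      [lra| |].
    + intros t Ht k Hk. apply ex_derive_n_comp_opp.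
      eapply filter_imp; [|apply derivable2_near, Hseg, Ht].
      intros u Hu k' Hk'. apply Hu. lia.
    + exists (- c). split; [apply Hseg; lra|].
      rewrite <- confluent_divdiff_opp, E, Derive_n_comp_opp.
      * replace ((-1) ^ 2) with 1 by ring. now rewrite Rmult_1_l.
      * apply derivable2_near, Hseg. lra.
      * apply (HA x Hx 1%nat). lia.
      * exact Hxy.
Qed.

(* Mean value theorem for u |-> slope A x1 u on the segment [x2, x3], which avoids x1. *)
Lemma divdiff2_mean_value_extreme x1 x2 x3 :
  Rabs (x1 - x0) < d -> Rabs (x2 - x0) < d -> Rabs (x3 - x0) < d -> x2 <> x3 ->
  (x1 < x2 /\ x1 < x3) \/ (x2 < x1 /\ x3 < x1) ->
  exists c, Rabs (c - x0) < d /\ divdiff2 A x1 x2 x3 = Derive_n A 2 c / 2.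
Proof.
  intros H1 H2 H3 H23 Hext.
  assert (Hseg : forall t, Rmin x2 x3 <= t <= Rmax x2 x3 -> Rabs (t - x0) < d /\ t <> x1).
  { intros t Ht. split; [exact (segment_in_ball x0 d x2 x3 t H2 H3 Ht)|].
    unfold Rmin, Rmax in Ht. destruct (Rle_dec x2 x3); lra. }
  destruct (MVT_gen (slope A x1) x2 x3 (fun t => confluent_divdiff A t x1)) as [c [Hc E]].
  - intros t Ht. destruct (Hseg t ltac:(lra)) as [Hb Hne].
    apply is_derive_slope; [apply (HA t Hb 1%nat); lia | exact Hne].
  - intros t Ht. destruct (Hseg t Ht) as [Hb Hne].
    apply ex_derive_continuity_pt. eexists.
    apply is_derive_slope; [apply (HA t Hb 1%nat); lia | exact Hne].
  - destruct (Hseg c Hc) as [Hcb Hcx].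
    destruct (confluent_divdiff_mean_value c x1 Hcb H1 Hcx) as [c' [Hc' E']].
    exists c'. split; [exact Hc'|]. rewrite <- E'.
    unfold divdiff2. rewrite E. field. lra.
Qed.

Lemma divdiff2_mean_value x1 x2 x3 :
  Rabs (x1 - x0) < d -> Rabs (x2 - x0) < d -> Rabs (x3 - x0) < d ->
  x1 <> x2 -> x1 <> x3 -> x2 <> x3 ->
  exists c, Rabs (c - x0) < d /\ divdiff2 A x1 x2 x3 = Derive_n A 2 c / 2.
Proof.
  intros H1 H2 H3 H12 H13 H23.
  (* If x1 lies between x2 and x3, then x2 does not lie between x1 and x3. *)
  destruct (Rlt_or_le x1 x2), (Rlt_or_le x1 x3);
    first [ apply divdiff2_mean_value_extreme; auto; lra
          | rewrite divdiff2_swap12 by assumption;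
            apply divdiff2_mean_value_extreme; auto; lra ].
Qed.

End TwiceDerivableOnBall.

(** * Limits as the three points merge *)

Lemma kappa0_sq A x : kappa0 A x ^ 2 = Derive_n A 2 x ^ 2 / (1 + Derive A x ^ 2) ^ 3.
Proof.
  unfold kappa0. rewrite <- sfun_sq. pose proof (sfun_gt0 A x). field. lra.
Qed.

Section FilterlimArith.

Context {T : Type} {F : (T -> Prop) -> Prop} {FF : Filter F}.

Lemma filterlim_Rplus (f g : T -> R) a b :
  filterlim f F (locally a) -> filterlim g F (locally b) ->
  filterlim (fun t => f t + g t) F (locally (a + b)).
Proof.
  intros Hf Hg. exact (filterlim_comp_2 f g Rplus Hf Hg (filterlim_plus (V := R_NormedModule) a b)).
Qed.

Lemma filterlim_Rmult (f g : T -> R) a b :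
  filterlim f F (locally a) -> filterlim g F (locally b) ->
  filterlim (fun t => f t * g t) F (locally (a * b)).
Proof.
  intros Hf Hg. exact (filterlim_comp_2 f g Rmult Hf Hg (filterlim_mult (K := R_AbsRing) a b)).
Qed.

Lemma filterlim_Rdiv (f g : T -> R) a b :
  filterlim f F (locally a) -> filterlim g F (locally b) -> b <> 0 ->
  filterlim (fun t => f t / g t) F (locally (a / b)).
Proof.
  intros Hf Hg Hb. apply (filterlim_Rmult f (fun t => / g t)); [exact Hf|].
  eapply filterlim_comp; [exact Hg | exact (continuous_Rinv b Hb)].
Qed.

Lemma filterlim_Rsqr (f : T -> R) a :
  filterlim f F (locally a) -> filterlim (fun t => f t ^ 2) F (locally (a ^ 2)).
Proof.
  intros Hf. rewrite <- Rsqr_pow2.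
  apply (filterlim_ext (fun t => f t * f t)); [intros t; unfold Rsqr; ring|].
  exact (filterlim_Rmult f f a a Hf Hf).
Qed.

Lemma filterlim_Rabs_lt (f : T -> R) l (e : posreal) :
  filterlim f F (locally l) -> F (fun t => Rabs (f t - l) < e).
Proof. intros Hf. exact (proj1 (filterlim_locally f l) Hf e). Qed.

Lemma filterlim_mean_value (f : T -> R) (g : R -> R) x0 : continuous g x0 ->
  (forall eps : posreal, F (fun t => exists c, Rabs (c - x0) < eps /\ f t = g c)) ->
  filterlim f F (locally (g x0)).
Proof.
  intros Hg Hf. apply filterlim_locally. intros eps.
  destruct (proj1 (filterlim_locally g (g x0)) Hg eps) as [d Hd].
  generalize (Hf d). apply filter_imp. intros t [c [Hc ->]]. exact (Hd c Hc).
Qed.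

End FilterlimArith.

Ltac filterlim_arith leaf :=
  cbv beta; lazymatch goal with
  | |- filterlim (fun t => @?f t + @?g t) _ _ =>
      apply (filterlim_Rplus f g); filterlim_arith leaf
  | |- filterlim (fun t => @?f t * @?g t) _ _ =>
      apply (filterlim_Rmult f g); filterlim_arith leaf
  | |- filterlim (fun t => @?f t / @?g t) _ _ =>
      apply (filterlim_Rdiv f g); [filterlim_arith leaf | filterlim_arith leaf | idtac]
  | |- filterlim (fun t => @?f t ^ 2) _ _ =>
      apply (filterlim_Rsqr f); filterlim_arith leaf
  | |- filterlim (fun _ => ?c) _ _ => apply filterlim_const
  | _ => leaf
  end.

Section MergingPoints.

Context {T : Type} {F : (T -> Prop) -> Prop} {FF : Filter F}.
Variables (A : R -> R) (x0 : R).
Hypothesis HA : locally x0 (fun u => forall k, (k <= 2)%nat -> ex_derive_n A k u).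
Hypothesis HA2 : continuous (Derive_n A 2) x0.

Lemma derivable2_ball (eps : posreal) : exists d : posreal, d <= eps /\
  forall t, Rabs (t - x0) < d -> forall k, (k <= 2)%nat -> ex_derive_n A k t.
Proof.
  destruct HA as [d Hd].
  exists (mkposreal _ (Rmin_stable_in_posreal d eps)). split; [apply Rmin_r|].
  intros t Ht. apply Hd. change (Rabs (t - x0) < d).
  pose proof (Rmin_l d eps). simpl in Ht. lra.
Qed.

Lemma continuous_Derive : continuous (Derive A) x0.
Proof.
  apply (ex_derive_continuous (K := R_AbsRing) (V := R_NormedModule)).
  apply (locally_singleton _ _ HA 2%nat). lia.
Qed.

Lemma continuous_half_Derive2 : continuous (fun u => Derive_n A 2 u / 2) x0.
Proof. exact (continuous_mult _ (fun _ => / 2) x0 HA2 (continuous_const _ _)). Qed.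

Lemma filterlim_Derive (p : T -> R) : filterlim p F (locally x0) ->
  filterlim (fun t => Derive A (p t)) F (locally (Derive A x0)).
Proof. intros Hp. eapply filterlim_comp; [exact Hp | exact continuous_Derive]. Qed.

Lemma filterlim_slope (p q : T -> R) :
  filterlim p F (locally x0) -> filterlim q F (locally x0) -> F (fun t => p t <> q t) ->
  filterlim (fun t => slope A (p t) (q t)) F (locally (Derive A x0)).
Proof.
  intros Hp Hq Hpq. apply filterlim_mean_value; [exact continuous_Derive|]. intros eps.
  destruct (derivable2_ball eps) as [d [Hde Hd]].
  generalize (filter_and _ _ (filterlim_Rabs_lt p x0 d Hp)
    (filter_and _ _ (filterlim_Rabs_lt q x0 d Hq) Hpq)).
  apply filter_imp. intros t [Hpt [Hqt Hne]].
  destruct (slope_mean_value A x0 d (p t) (q t)) as [c [Hc E]]; auto.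
  - intros u Hu. apply (Hd u Hu 1%nat). lia.
  - exists c. split; [lra | exact E].
Qed.

Lemma filterlim_confluent_divdiff (p q : T -> R) :
  filterlim p F (locally x0) -> filterlim q F (locally x0) -> F (fun t => p t <> q t) ->
  filterlim (fun t => confluent_divdiff A (p t) (q t)) F (locally (Derive_n A 2 x0 / 2)).
Proof.
  intros Hp Hq Hpq.
  apply (filterlim_mean_value _ (fun u => Derive_n A 2 u / 2)); [exact continuous_half_Derive2|].
  intros eps. destruct (derivable2_ball eps) as [d [Hde Hd]].
  generalize (filter_and _ _ (filterlim_Rabs_lt p x0 d Hp)
    (filter_and _ _ (filterlim_Rabs_lt q x0 d Hq) Hpq)).
  apply filter_imp. intros t [Hpt [Hqt Hne]].
  destruct (confluent_divdiff_mean_value A x0 d Hd (p t) (q t)) as [c [Hc E]]; auto.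
  exists c. split; [lra | exact E].
Qed.

Lemma filterlim_divdiff2 (p q r : T -> R) :
  filterlim p F (locally x0) -> filterlim q F (locally x0) -> filterlim r F (locally x0) ->
  F (fun t => p t <> q t) -> F (fun t => p t <> r t) -> F (fun t => q t <> r t) ->
  filterlim (fun t => divdiff2 A (p t) (q t) (r t)) F (locally (Derive_n A 2 x0 / 2)).
Proof.
  intros Hp Hq Hr Hpq Hpr Hqr.
  apply (filterlim_mean_value _ (fun u => Derive_n A 2 u / 2)); [exact continuous_half_Derive2|].
  intros eps. destruct (derivable2_ball eps) as [d [Hde Hd]].
  generalize (filter_and _ _ (filterlim_Rabs_lt p x0 d Hp)
    (filter_and _ _ (filterlim_Rabs_lt q x0 d Hq) (filter_and _ _ (filterlim_Rabs_lt r x0 d Hr)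
    (filter_and _ _ Hpq (filter_and _ _ Hpr Hqr))))).
  apply filter_imp. intros t [Hpt [Hqt [Hrt [Hne1 [Hne2 Hne3]]]]].
  destruct (divdiff2_mean_value A x0 d Hd (p t) (q t) (r t)) as [c [Hc E]]; auto.
  exists c. split; [lra | exact E].
Qed.

Section ThreePoints.

Variables p1 p2 p3 : T -> R.
Hypotheses (Hp1 : filterlim p1 F (locally x0)) (Hp2 : filterlim p2 F (locally x0))
  (Hp3 : filterlim p3 F (locally x0)).
Hypotheses (H12 : F (fun t => p1 t <> p2 t)) (H13 : F (fun t => p1 t <> p3 t))
  (H23 : F (fun t => p2 t <> p3 t)).

Ltac graph_leaf :=
  first [ apply filterlim_Derive; assumption
        | apply filterlim_slope; assumption
        | apply filterlim_confluent_divdiff; assumption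
        | apply filterlim_divdiff2; assumption ].

Lemma filterlim_graph_curv2 :
  filterlim (fun t => graph_curv2 A (p1 t) (p2 t) (p3 t)) F (locally (kappa0 A x0 ^ 2)).
Proof.
  pose proof (one_plus_sq_neq0 (Derive A x0)).
  replace (kappa0 A x0 ^ 2) with (4 * (Derive_n A 2 x0 / 2) ^ 2 /
    ((1 + Derive A x0 ^ 2) * (1 + Derive A x0 ^ 2) * (1 + Derive A x0 ^ 2)))
    by (rewrite kappa0_sq; field; assumption).
  unfold graph_curv2. filterlim_arith graph_leaf.
  repeat apply Rmult_integral_contrapositive_currified; assumption.
Qed.

Lemma filterlim_graph_SRe :
  filterlim (fun t => graph_SRe A (p1 t) (p2 t) (p3 t)) F (locally (3 / 2 * kappa0 A x0 ^ 2)).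
Proof.
  pose proof (one_plus_sq_neq0 (Derive A x0)).
  assert (H21 : F (fun t => p2 t <> p1 t)) by (revert H12; apply filter_imp; auto).
  assert (H31 : F (fun t => p3 t <> p1 t)) by (revert H13; apply filter_imp; auto).
  assert (H32 : F (fun t => p3 t <> p2 t)) by (revert H23; apply filter_imp; auto).
  pose (l := Derive_n A 2 x0 / 2 * (Derive_n A 2 x0 / 2) /
    ((1 + Derive A x0 ^ 2) * (1 + Derive A x0 ^ 2) * (1 + Derive A x0 ^ 2))).
  replace (3 / 2 * kappa0 A x0 ^ 2) with (2 * (l + l + l))
    by (unfold l; rewrite kappa0_sq; field; assumption).
  unfold graph_SRe, ReK_pair, l. filterlim_arith graph_leaf.
  all: repeat apply Rmult_integral_contrapositive_currified; assumption.
Qed.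

End ThreePoints.

End MergingPoints.

Definition distinct3 (t : R * R * R) : Prop :=
  let '(x1, x2, x3) := t in x1 <> x2 /\ x1 <> x3 /\ x2 <> x3.

Definition merging_triples (x0 : R) : (R * R * R -> Prop) -> Prop :=
  within distinct3 (locally (x0, x0, x0)).

Lemma merging_triples_components x0 :
  filterlim (fun t => fst (fst t)) (merging_triples x0) (locally x0) /\
  filterlim (fun t => snd (fst t)) (merging_triples x0) (locally x0) /\
  filterlim (fun t : R * R * R => snd t) (merging_triples x0) (locally x0).
Proof.
  repeat split; apply filterlim_locally; intros eps; exists eps;
    intros [[y1 y2] y3] [[H1 H2] H3] _; assumption.
Qed.

Lemma merging_triples_distinct x0 :
  merging_triples x0 (fun t => fst (fst t) <> snd (fst t)) /\
  merging_triples x0 (fun t => fst (fst t) <> snd t) /\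
  merging_triples x0 (fun t => snd (fst t) <> snd t).
Proof.
  unfold merging_triples, within.
  repeat split; apply filter_forall; intros [[y1 y2] y3] Hd; apply Hd.
Qed.

Lemma merging_triples_ball x0 P (r : posreal) : merging_triples x0 P ->
  exists d : posreal, d <= r /\ forall y1 y2 y3,
    Rabs (y1 - x0) < d -> Rabs (y2 - x0) < d -> Rabs (y3 - x0) < d ->
    y1 <> y2 -> y1 <> y3 -> y2 <> y3 -> P (y1, y2, y3).
Proof.
  intros [d Hd]. exists (mkposreal _ (Rmin_stable_in_posreal d r)).
  split; [apply Rmin_r|]. intros y1 y2 y3 H1 H2 H3 H12 H13 H23. simpl in H1, H2, H3.
  assert (Hball : forall y, Rabs (y - x0) < Rmin d r -> ball x0 d y).
  { intros y Hy. change (Rabs (y - x0) < d). pose proof (Rmin_l d r). lra. }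
  apply Hd; repeat split; auto.
Qed.

Lemma graph_estimates A x1 x2 x3 c k e : x1 <> x2 -> x1 <> x3 -> x2 <> x3 ->
  divdiff2 A x1 x2 x3 <> 0 -> menger (x1, A x1) (x2, A x2) (x3, A x3) c ->
  Rabs (graph_curv2 A x1 x2 x3 - k) < e / 4 ->
  Rabs (graph_SRe A x1 x2 x3 - 3 / 2 * k) < e / 4 ->
  Rabs (c ^ 2 - k) < e /\
  Rabs (Sreal (ReK A) (x1, A x1) (x2, A x2) (x3, A x3) - 3 / 2 * c ^ 2) < e /\
  Rabs (Sreal (ImK A) (x1, A x1) (x2, A x2) (x3, A x3) + 1 / 2 * c ^ 2) < e.
Proof.
  intros H12 H13 H23 Hdd Hm Hc Hs.
  pose proof (Sreal_ReK_add_ImK_graph A x1 x2 x3 H12 H13 H23) as Hsum.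
  rewrite Sreal_ReK_graph in Hsum |- * by assumption.
  rewrite (menger_graph A x1 x2 x3 c) by assumption.
  apply Rabs_def2 in Hc, Hs. repeat split; apply Rabs_def1; lra.
Qed.

Section LocalEstimates.

Variables (A : R -> R) (x0 : R).
Hypothesis HA : locally x0 (fun u => forall k, (k <= 2)%nat -> ex_derive_n A k u).
Hypothesis HA2 : continuous (Derive_n A 2) x0.
Hypothesis HL : Derive_n A 2 x0 <> 0.

Theorem graph_kernel_estimates (eps : R) (r : posreal) : 0 < eps ->
  exists d : posreal, d <= r /\ forall z1 z2 z3 : C,
    onGamma A x0 d z1 -> onGamma A x0 d z2 -> onGamma A x0 d z3 ->
    z1 <> z2 -> z1 <> z3 -> z2 <> z3 ->
    forall c : R, menger z1 z2 z3 c ->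
      Rabs (c ^ 2 - kappa0 A x0 ^ 2) < eps /\
      Rabs (Sreal (ReK A) z1 z2 z3 - 3 / 2 * c ^ 2) < eps /\
      Rabs (Sreal (ImK A) z1 z2 z3 + 1 / 2 * c ^ 2) < eps.
Proof.
  intros He.
  destruct (merging_triples_components x0) as [Hp1 [Hp2 Hp3]].
  destruct (merging_triples_distinct x0) as [H12 [H13 H23]].
  assert (He4 : 0 < eps / 4) by lra.
  assert (HL2 : 0 < Rabs (Derive_n A 2 x0 / 2)) by (apply Rabs_pos_lt; lra).
  pose proof (filterlim_Rabs_lt _ _ (mkposreal _ He4)
    (filterlim_graph_curv2 A x0 HA HA2 _ _ _ Hp1 Hp2 Hp3 H12 H13 H23)) as Ec.
  pose proof (filterlim_Rabs_lt _ _ (mkposreal _ He4)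
    (filterlim_graph_SRe A x0 HA HA2 _ _ _ Hp1 Hp2 Hp3 H12 H13 H23)) as Es.
  pose proof (filterlim_Rabs_lt _ _ (mkposreal _ HL2)
    (filterlim_divdiff2 A x0 HA HA2 _ _ _ Hp1 Hp2 Hp3 H12 H13 H23)) as Ed.
  destruct (merging_triples_ball x0 _ r (filter_and _ _ Ec (filter_and _ _ Es Ed)))
    as [d [Hdr Hd]].
  exists d. split; [exact Hdr|].
  intros z1 z2 z3 [y1 [B1 ->]] [y2 [B2 ->]] [y3 [B3 ->]] N12 N13 N23 c Hm.
  assert (y1 <> y2) by (intros ->; apply N12; reflexivity).
  assert (y1 <> y3) by (intros ->; apply N13; reflexivity).
  assert (y2 <> y3) by (intros ->; apply N23; reflexivity).
  destruct (Hd y1 y2 y3) as [Fc [Fs Fd]]; auto; simpl in Fc, Fs, Fd.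
  apply graph_estimates; auto.
  intros E. rewrite E, Rminus_0_l, Rabs_Ropp in Fd. lra.
Qed.

End LocalEstimates.

Lemma inJ_locally a b x0 : inJ a b x0 -> locally x0 (inJ a b).
Proof.
  intros [Ha Hb].
  apply filter_and; [exact (open_Rbar_gt' x0 a Ha) | exact (open_Rbar_lt' x0 b Hb)].
Qed.

Lemma C3_on_near a b A x0 : C3_on a b A -> inJ a b x0 ->
  locally x0 (fun u => forall k, (k <= 2)%nat -> ex_derive_n A k u) /\
  continuous (Derive_n A 2) x0.
Proof.
  intros [HA _] Hx0. split.
  - eapply filter_imp; [|exact (inJ_locally a b x0 Hx0)].
    intros u Hu k Hk. apply HA; [exact Hu | lia].
  - apply (ex_derive_continuous (K := R_AbsRing) (V := R_NormedModule)).
    exact (HA x0 Hx0 3%nat (le_n 3)).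
Qed.

Lemma kappa0_sq_pos A x0 : Derive_n A 2 x0 <> 0 -> 0 < kappa0 A x0 ^ 2.
Proof.
  intros HL. rewrite kappa0_sq. apply Rdiv_lt_0_compat; [apply pow2_gt_0, HL|].
  apply pow_lt. nra.
Qed.

Lemma line_through (z w : C) : exists p q r : R, (p <> 0 \/ q <> 0) /\
  p * Re z + q * Im z = r /\ p * Re w + q * Im w = r.
Proof.
  destruct (Req_dec (Re z) (Re w)) as [E | E].
  - exists 1, 0, (Re z). split; [left; lra | split; lra].
  - exists (Im w - Im z), (Re z - Re w), ((Im w - Im z) * Re z + (Re z - Re w) * Im z).
    split; [right; lra | split; ring].
Qed.

Lemma noncollinear_distinct z1 z2 z3 : ~ collinear z1 z2 z3 ->
  z1 <> z2 /\ z1 <> z3 /\ z2 <> z3.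
Proof.
  intros Hnc. repeat split; intros <-; apply Hnc.
  - destruct (line_through z1 z3) as [p [q [r [Hpq [E1 E3]]]]]. exists p, q, r. tauto.
  - destruct (line_through z1 z2) as [p [q [r [Hpq [E1 E2]]]]]. exists p, q, r. tauto.
  - destruct (line_through z1 z2) as [p [q [r [Hpq [E1 E2]]]]]. exists p, q, r. tauto.
Qed.

Lemma ratio_estimate S c2 a k e : Rabs (S - a * c2) < e -> Rabs (c2 - k) < e -> e < k ->
  Rabs (S / c2 - a) < e / (k - e).
Proof.
  intros HS Hc Hek. apply Rabs_def2 in Hc.
  replace (S / c2 - a) with ((S - a * c2) / c2) by (field; lra).
  rewrite Rabs_div, (Rabs_pos_eq c2) by lra.
  apply Rlt_le_trans with (e / c2).
  - apply Rmult_lt_compat_r; [apply Rinv_0_lt_compat; lra | exact HS].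
  - apply Rmult_le_compat_l; [pose proof (Rabs_pos (S - a * c2)); lra|].
    apply Rinv_le_contravar; lra.
Qed.

Theorem corollary1p2 (a b : Rbar) (A : R -> R) (x0 : R) :
  C3_on a b A -> inJ a b x0 -> Derive_n A 2 x0 <> 0 ->
  exists eps0 : R, 0 < eps0 /\
  forall eps : R, 0 < eps < eps0 ->
  exists delta : R, 0 < delta /\
    (forall x, Rabs (x - x0) < delta -> inJ a b x) /\
    (* delta is furnished by the local statement with epsilon = eps *)
    (forall z1 z2 z3 : C,
       onGamma A x0 delta z1 -> onGamma A x0 delta z2 -> onGamma A x0 delta z3 ->
       z1 <> z2 -> z1 <> z3 -> z2 <> z3 ->
       forall c : R, menger z1 z2 z3 c ->
         Rabs (c ^ 2 - (kappa0 A x0) ^ 2) < eps /\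
         Rabs (Sreal (ReK A) z1 z2 z3 - 3 / 2 * c ^ 2) < eps /\
         Rabs (Sreal (ImK A) z1 z2 z3 + 1 / 2 * c ^ 2) < eps) /\
    (* the conclusion of the corollary *)
    (forall z1 z2 z3 : C,
       onGamma A x0 delta z1 -> onGamma A x0 delta z2 -> onGamma A x0 delta z3 ->
       ~ collinear z1 z2 z3 ->
       forall c : R, menger z1 z2 z3 c ->
         Rabs (Sreal (ReK A) z1 z2 z3 / c ^ 2 - 3 / 2)
           < eps / ((kappa0 A x0) ^ 2 - eps) /\
         Rabs (Sreal (ImK A) z1 z2 z3 / c ^ 2 + 1 / 2)
           < eps / ((kappa0 A x0) ^ 2 - eps)).
Proof.
  intros HC3 Hx0 HL. destruct (C3_on_near a b A x0 HC3 Hx0) as [HA HA2].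
  exists (kappa0 A x0 ^ 2). split; [exact (kappa0_sq_pos A x0 HL)|].
  intros eps [He Hek].
  destruct (inJ_locally a b x0 Hx0) as [dJ HdJ].
  destruct (graph_kernel_estimates A x0 HA HA2 HL eps dJ He) as [d [HddJ Hd]].
  exists d. split; [apply cond_pos|]. split; [|split; [exact Hd|]].
  - intros x Hx. apply HdJ. change (Rabs (x - x0) < dJ). lra.
  - intros z1 z2 z3 G1 G2 G3 Hnc c Hm.
    destruct (noncollinear_distinct z1 z2 z3 Hnc) as [N12 [N13 N23]].
    destruct (Hd z1 z2 z3 G1 G2 G3 N12 N13 N23 c Hm) as [Hc [Hre Him]].
    set (SIm := Sreal (ImK A) z1 z2 z3) in Him |- *.
    split; [apply ratio_estimate; assumption|].
    replace (SIm / c ^ 2 + 1 / 2) with (SIm / c ^ 2 - - (1 / 2)) by ring.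
    apply ratio_estimate; [|assumption..].
    replace (SIm - - (1 / 2) * c ^ 2) with (SIm + 1 / 2 * c ^ 2) by ring. exact Him.
Qed.
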